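(* Let $m,n$ be distinct positive integers with greatest common divisor $\ell$. Then in $\mathbb{Q}((T))$, $$\mathbf{B}(mT)\mathbf{B}(nT)=\mathbf{B}^2(\ell T)+mT\,\mathbf{B}(nT)\,g_{n,m}(e^T)+nT\,\mathbf{B}(mT)\,g_{m,n}(e^T).$$
   Context: $\mathbf{B}(T)=T/(e^T-1)\in\mathbb{Q}[[T]]$, $\mathbf{B}(cT)=cT/(e^{cT}-1)$ for $0\ne c\in\mathbb{Q}$, and $\mathbf{B}^2(\ell T)=(\mathbf{B}(\ell T))^2$. The polynomials $g_{m,n}\in\mathbb{Q}[X]$ are defined as follows. For distinct coprime positive integers $m,n$, $g_{m,n}$ and $g_{n,m}$ are the (unique) polynomials with $\deg g_{m,n}<m-1$ and $\deg g_{n,m}<n-1$ such that $$\frac{1}{(X-1)(1+X+\cdots+X^{m-1})(1+X+\cdots+X^{n-1})}=\frac{1}{mn(X-1)}+\frac{g_{n,m}}{1+X+\cdots+X^{n-1}}+\frac{g_{m,n}}{1+X+\cdots+X^{m-1}}$$ (so in particular $g_{1,m}=0$). For general distinct positive integers $m,n$ with greatest common divisor $\ell$, set $g_{n,m}=g_{n/\ell,m/\ell}(X^\ell)$ and $g_{m,n}=g_{m/\ell,n/\ell}(X^\ell)$. *)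

From HB Require Import structures.
From mathcomp Require Import all_boot all_order all_algebra.
Set Implicit Arguments. Unset Strict Implicit. Unset Printing Implicit Defensive.
Import Order.TTheory GRing.Theory Num.Theory.
Local Open Scope ring_scope.

Definition fps := nat -> rat.

Definition fps_add (f g : fps) : fps := fun k => f k + g k.
Definition fps_scale (c : rat) (f : fps) : fps := fun k => c * f k.
Definition fps_mul (f g : fps) : fps :=
  fun k => \sum_(i < k.+1) f i * g (k - i)%N.
Definition fps_one : fps := fun k => (k == 0%N)%:R.
Definition fps_T : fps := fun k => (k == 1%N)%:R.
Definition fps_pow (f : fps) (n : nat) : fps := iter n (fps_mul f) fps_one.

Definition fps_exp (c : rat) : fps := fun k => c ^+ k / (k`!)%:R.

Fixpoint fps_inv_seq (f : fps) (n : nat) : seq rat :=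
  match n with
  | 0 => [:: (f 0%N)^-1]
  | n'.+1 => let s := fps_inv_seq f n' in
      rcons s (- (f 0%N)^-1 *
               \sum_(1 <= i < n'.+2) f i * nth 0 s (n'.+1 - i)%N)
  end.
Definition fps_inv (f : fps) : fps := fun k => nth 0 (fps_inv_seq f k) k.

(* (e^{cT} - 1)/(cT) = sum_k c^k T^k / (k+1)!  (constant term 1). *)
Definition fps_expm1_div (c : rat) : fps := fun k => c ^+ k / (k.+1`!)%:R.

(* B(cT) = cT / (e^{cT} - 1) = ((e^{cT}-1)/(cT))^{-1}, for c <> 0. *)
Definition Bser (c : rat) : fps := fps_inv (fps_expm1_div c).

Definition B2ser (c : rat) : fps := fps_mul (Bser c) (Bser c).

Definition fps_peval (p : {poly rat}) (E : fps) : fps :=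
  fun k => \sum_(i < size p) p`_i * fps_pow E i k.

Definition Phi (k : nat) : {poly rat} := \sum_(i < k) 'X^i.

(* For distinct coprime positive m, n: gmn = g_{m,n}, gnm = g_{n,m} are the
   polynomials with deg g_{m,n} < m-1, deg g_{n,m} < n-1 (i.e. size <= m-1,
   size <= n-1, the zero polynomial allowed) such that, in Q(X),
   1/((X-1) Phi_m Phi_n) = 1/(mn(X-1)) + g_{n,m}/Phi_n + g_{m,n}/Phi_m. *)
Definition g_coprime_spec (m n : nat) (gmn gnm : {poly rat}) : Prop :=
  [/\ (size gmn <= m - 1)%N, (size gnm <= n - 1)%N &
   (1 / (tofrac (('X - 1) * Phi m * Phi n)) : {fraction {poly rat}})
   = 1 / tofrac ((m * n)%:R * ('X - 1))
     + tofrac gnm / tofrac (Phi n) + tofrac gmn / tofrac (Phi m)].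

Definition g_spec (m n : nat) (gmn gnm : {poly rat}) : Prop :=
  let l := gcdn m n in
  exists g1 g2 : {poly rat},
    [/\ g_coprime_spec (m %/ l) (n %/ l) g1 g2,
        gmn = g1 \Po 'X^l & gnm = g2 \Po 'X^l].

From HB Require Import structures.
From mathcomp Require Import all_boot all_order all_algebra.
From mathcomp Require Import boolp ring.
Import GRing.Theory Num.Theory.
Local Open Scope ring_scope.

(* Write [m = m' l], [n = n' l] and put [Y = e^{lT}].  Clearing denominators
   in the partial fraction decomposition defining [g_{m',n'}] and [g_{n',m'}]
   gives a polynomial identity, which at [X = Y] becomes an identity between
   [Y - 1 = lT D(lT)], [Y^{m'} - 1 = mT D(mT)] and [Y^{n'} - 1 = nT D(nT)],
   where [D(cT) = (e^{cT} - 1)/(cT) = 1/B(cT)].  Cancelling [mnT^2] and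
   multiplying by [B(lT)^2 B(mT) B(nT)] yields the theorem. *)

HB.instance Definition _ := Choice.on fps.

Definition fps_zero : fps := fun _ => 0.
Definition fps_opp (f : fps) : fps := fun k => - f k.

Lemma fps_addA : associative fps_add.
Proof. by move=> f g h; apply: funext => k; rewrite /fps_add addrA. Qed.

Lemma fps_addC : commutative fps_add.
Proof. by move=> f g; apply: funext => k; rewrite /fps_add addrC. Qed.

Lemma fps_add0 : left_id fps_zero fps_add.
Proof. by move=> f; apply: funext => k; rewrite /fps_add add0r. Qed.

Lemma fps_addN : left_inverse fps_zero fps_opp fps_add.
Proof. by move=> f; apply: funext => k; rewrite /fps_add addNr. Qed.

HB.instance Definition _ :=
  GRing.isZmodule.Build fps fps_addA fps_addC fps_add0 fps_addN.

(* Up to degree [k] a Cauchy product only sees the truncations to degree [k],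
   so the ring laws of [fps] are inherited from [{poly rat}]. *)
Definition fps_trunc (k : nat) (f : fps) : {poly rat} := \poly_(i < k.+1) f i.

Lemma coef_truncMl k (f : fps) (p : {poly rat}) :
  \sum_(i < k.+1) f i * p`_(k - i) = (fps_trunc k f * p)`_k.
Proof. by rewrite coefM; apply: eq_bigr => i _; rewrite coef_poly ltn_ord. Qed.

Lemma coef_truncMr k (p : {poly rat}) (f : fps) :
  \sum_(i < k.+1) p`_i * f (k - i)%N = (p * fps_trunc k f)`_k.
Proof.
by rewrite coefM; apply: eq_bigr => i _; rewrite coef_poly ltnS leq_subr.
Qed.

Lemma fps_mul_trunc (f g : fps) {i k : nat} : (i <= k)%N ->
  fps_mul f g i = (fps_trunc k f * fps_trunc k g)`_i.
Proof.
move=> le_ik; rewrite coefM; apply: eq_bigr => [[j /= lt_ji]] _.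
by rewrite !coef_poly !ltnS (leq_trans _ le_ik) ?(leq_trans (leq_subr _ _)).
Qed.

Lemma fps_mul_coef (f g : fps) k :
  fps_mul f g k = \sum_(i < k.+1) f i * g (k - i)%N.
Proof. by []. Qed.

Lemma fps_mulA : associative fps_mul.
Proof.
move=> f g h; apply: funext => k; rewrite [LHS]fps_mul_coef [RHS]fps_mul_coef.
under eq_bigr => j _ do rewrite (fps_mul_trunc g h (leq_subr j k)).
under [RHS]eq_bigr => j _ do rewrite (fps_mul_trunc f g (ltnSE (ltn_ord j))).
by rewrite coef_truncMl coef_truncMr mulrA.
Qed.

Lemma fps_mulC : commutative fps_mul.
Proof.
by move=> f g; apply: funext => k; rewrite !(fps_mul_trunc _ _ (leqnn k)) mulrC.
Qed.

Lemma fps_mul1 : left_id fps_one fps_mul.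
Proof.
move=> f; apply: funext => k; rewrite /fps_mul big_ord_recl /fps_one /= mul1r.
by rewrite subn0 big1 ?addr0 // => i _; rewrite mul0r.
Qed.

Lemma fps_mulDl : left_distributive fps_mul fps_add.
Proof.
move=> f g h; apply: funext => k; rewrite /fps_mul /fps_add -big_split /=.
by apply: eq_bigr => i _; rewrite mulrDl.
Qed.

Lemma fps_one_neq0 : fps_one != fps_zero.
Proof. by apply/eqP => /(congr1 (fun f => f 0%N))/eqP; rewrite oner_eq0. Qed.

HB.instance Definition _ := GRing.Zmodule_isComNzRing.Build fps
  fps_mulA fps_mulC fps_mul1 fps_mulDl fps_one_neq0.

Lemma fps_addE (f g : fps) : fps_add f g = f + g.
Proof. by []. Qed.

Lemma fps_mulE (f g : fps) : fps_mul f g = f * g.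
Proof. by []. Qed.

Lemma coef_fpsB (f g : fps) k : (f - g) k = f k - g k.
Proof. by []. Qed.

Lemma coef_fpsM (f g : fps) k : (f * g) k = \sum_(i < k.+1) f i * g (k - i)%N.
Proof. by []. Qed.

Lemma coef_fps_sum I (r : seq I) (P : pred I) (F : I -> fps) k :
  (\sum_(i <- r | P i) F i) k = \sum_(i <- r | P i) F i k.
Proof. by elim/big_rec2: _ => //= i y1 y2 _ <-. Qed.

Definition fps_const (c : rat) : fps := fun k => c * (k == 0%N)%:R.

Lemma coef_fps_constM c (f : fps) k : (fps_const c * f) k = c * f k.
Proof.
rewrite coef_fpsM big_ord_recl /fps_const /= mulr1 subn0.
by rewrite big1 ?addr0 // => i _; rewrite mulr0 mul0r.
Qed.

Lemma fps_const_is_zmod_morphism : zmod_morphism fps_const.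
Proof. by move=> a b; apply: funext => k; rewrite /fps_const mulrBl. Qed.

Lemma fps_const_is_monoid_morphism : monoid_morphism fps_const.
Proof.
split; first by apply: funext => k; rewrite /fps_const mul1r.
by move=> a b; apply: funext => k; rewrite coef_fps_constM /fps_const mulrA.
Qed.

HB.instance Definition _ :=
  GRing.isZmodMorphism.Build rat fps fps_const fps_const_is_zmod_morphism.
HB.instance Definition _ :=
  GRing.isMonoidMorphism.Build rat fps fps_const fps_const_is_monoid_morphism.

Lemma fps_const_inj : injective fps_const.
Proof. by move=> a b /(congr1 (fun f => f 0%N)); rewrite /fps_const !mulr1. Qed.

Lemma fps_scaleE c (f : fps) : fps_scale c f = fps_const c * f.
Proof. by apply: funext => k; rewrite coef_fps_constM. Qed.

Lemma fps_nat_lreg k : (0 < k)%N -> GRing.lreg (k%:R : fps).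
Proof.
move=> k_gt0 f g eq_kfg; rewrite -[f]mul1r -[g]mul1r.
have <- : fps_const k%:R^-1 * k%:R = 1.
  by rewrite -(rmorph_nat fps_const) -rmorphM mulVf ?rmorph1 // pnatr_eq0 -lt0n.
by rewrite -!mulrA eq_kfg.
Qed.

Lemma coef_fps_TMS (f : fps) k : (fps_T * f) k.+1 = f k.
Proof.
rewrite coef_fpsM 2!big_ord_recl /fps_T mul0r add0r mul1r subSS subn0.
by rewrite big1 ?addr0 // => i _; rewrite mul0r.
Qed.

Lemma fps_T_lreg : GRing.lreg fps_T.
Proof.
move=> f g eq_Tfg; apply: funext => k.
by rewrite -(coef_fps_TMS f) -(coef_fps_TMS g) eq_Tfg.
Qed.

Lemma fps_powE (f : fps) i : fps_pow f i = f ^+ i.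
Proof. by elim: i => //= i ->; rewrite exprS. Qed.

Lemma fps_const_comm (x : fps) : commr_rmorph fps_const x.
Proof. by move=> c; apply: mulrC. Qed.

Lemma fps_pevalE p (x : fps) : fps_peval p x = horner_morph (fps_const_comm x) p.
Proof.
apply: funext => k; rewrite /horner_morph horner_coef.
rewrite size_map_inj_poly ?rmorph0 //; last exact: fps_const_inj.
by rewrite coef_fps_sum; apply: eq_bigr => i _; rewrite coef_map coef_fps_constM fps_powE.
Qed.

Lemma size_fps_inv_seq (f : fps) n : size (fps_inv_seq f n) = n.+1.
Proof. by elim: n => //= n IH; rewrite size_rcons IH. Qed.

Lemma nth_fps_inv_seq (f : fps) n j :
  (j <= n)%N -> nth 0 (fps_inv_seq f n) j = fps_inv f j.
Proof.
elim: n => [|n IH]; first by rewrite leqn0 => /eqP ->.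
rewrite leq_eqVlt => /orP [/eqP -> //|lt_jn].
by rewrite /= nth_rcons size_fps_inv_seq lt_jn IH.
Qed.

Lemma fps_invS (f : fps) n : fps_inv f n.+1 =
  - (f 0%N)^-1 * \sum_(1 <= i < n.+2) f i * fps_inv f (n.+1 - i)%N.
Proof.
rewrite {1}/fps_inv /= nth_rcons size_fps_inv_seq ltnn eqxx.
congr (_ * _); rewrite !big_nat; apply: eq_bigr => i /andP [i_gt0 _].
by rewrite nth_fps_inv_seq // leq_subLR -add1n leq_add2r.
Qed.

Lemma fps_mulV (f : fps) : f 0%N != 0 -> f * fps_inv f = 1.
Proof.
move=> f0_neq0; apply: funext => -[|n].
  by rewrite coef_fpsM big_ord1 /fps_inv /= mulfV.
rewrite coef_fpsM big_ord_recl subn0 fps_invS big_add1 big_mkord /=.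
rewrite mulrA mulrN mulfV // mulN1r.
by under [X in _ + X]eq_bigr => i _ do rewrite /bump /=; rewrite addNr.
Qed.

Lemma fps_expD a b : fps_exp a * fps_exp b = fps_exp (a + b).
Proof.
apply: funext => k; rewrite coef_fpsM /fps_exp addrC exprDn mulr_suml.
apply: eq_bigr => -[i /=]; rewrite ltnS => le_ik _.
have fact_neq0 j : (j`!)%:R != 0 :> rat by rewrite pnatr_eq0 -lt0n fact_gt0.
have bin_neq0 : ('C(k, i))%:R != 0 :> rat by rewrite pnatr_eq0 -lt0n bin_gt0.
rewrite -mulr_natr -(bin_fact le_ik) !natrM.
by field; rewrite !fact_neq0 bin_neq0.
Qed.

Lemma fps_exp0 : fps_exp 0 = 1.
Proof.
by apply: funext => -[|k]; rewrite /fps_exp expr0n /= ?mul0r // fact0 divr1.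
Qed.

Lemma fps_expMn a j : fps_exp a ^+ j = fps_exp (j%:R * a).
Proof.
elim: j => [|j IH]; first by rewrite expr0 mul0r fps_exp0.
by rewrite exprS IH fps_expD -natr1 mulrDl mul1r addrC.
Qed.

Lemma fps_expB1 c : fps_exp c - 1 = fps_const c * fps_T * fps_expm1_div c.
Proof.
apply: funext => -[|k]; rewrite -mulrA coef_fpsB coef_fps_constM.
  by rewrite /fps_exp /= expr0 divr1 subrr coef_fpsM big_ord1 /fps_T mul0r mulr0.
by rewrite coef_fps_TMS /fps_exp /fps_expm1_div subr0 exprS mulrA.
Qed.

Lemma mul_expm1_div_Bser (c : rat) : fps_expm1_div c * Bser c = 1.
Proof.
by apply: fps_mulV; rewrite /fps_expm1_div mul1r invr_eq0 pnatr_eq0 -lt0n fact_gt0.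
Qed.

Lemma fps_peval_comp_Xn p l c :
  fps_peval (p \Po 'X^l) (fps_exp c) = fps_peval p (fps_exp (l%:R * c)).
Proof.
rewrite !fps_pevalE /horner_morph map_comp_poly horner_comp map_polyXn.
by rewrite hornerXn fps_expMn.
Qed.

Lemma Phi_at1 k : (Phi k).[1] = k%:R.
Proof.
rewrite /Phi horner_sum (eq_bigr (fun _ => 1)) ?sumr_const ?card_ord // => i _.
by rewrite hornerXn expr1n.
Qed.

Lemma Phi_neq0 k : (0 < k)%N -> Phi k != 0.
Proof.
move=> k_gt0; apply/eqP => /(congr1 (horner^~ 1))/eqP.
by rewrite Phi_at1 horner0 pnatr_eq0 -leqn0 leqNgt k_gt0.
Qed.

Lemma mul_Xsub1_Phi k : ('X - 1) * Phi k = 'X^k - 1.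
Proof. by rewrite subrX1. Qed.

Lemma clear_partial_fractions (K : fieldType) (a b c N u v : K) :
  a != 0 -> b != 0 -> c != 0 -> N != 0 ->
  1 / (a * b * c) = 1 / (N * a) + v / c + u / b ->
  N * a ^+ 2 = (a * b) * (a * c) + N * a ^+ 2 * (v * (a * b) + u * (a * c)).
Proof.
move=> a_neq0 b_neq0 c_neq0 N_neq0 decomp.
transitivity (N * a ^+ 3 * b * c * (1 / (a * b * c))).
  by field; rewrite a_neq0 b_neq0 c_neq0.
by rewrite decomp; field; rewrite ?a_neq0 ?b_neq0 ?c_neq0 ?N_neq0.
Qed.

Lemma g_coprime_spec_clear {m n : nat} {g1 g2 : {poly rat}} :
  (0 < m)%N -> (0 < n)%N -> g_coprime_spec m n g1 g2 ->
  (m * n)%:R * ('X - 1) ^+ 2 = ('X^m - 1) * ('X^n - 1)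
    + (m * n)%:R * ('X - 1) ^+ 2 * (g2 * ('X^m - 1) + g1 * ('X^n - 1))
    :> {poly rat}.
Proof.
move=> m_gt0 n_gt0 [_ _ decomp].
have tofrac_neq0 (p : {poly rat}) : p != 0 -> tofrac p != 0 by rewrite tofrac_eq0.
rewrite -!mul_Xsub1_Phi; apply/eqP; rewrite -tofrac_eq; apply/eqP; move: decomp.
set N : {poly rat} := (m * n)%:R.
rewrite !(rmorphD, rmorphM, rmorphXn) /=.
apply: clear_partial_fractions; rewrite -?rmorphD; apply: tofrac_neq0.
- by rewrite -polyC1 polyXsubC_eq0.
- exact: Phi_neq0.
- exact: Phi_neq0.
- by rewrite /N -polyC_natr polyC_eq0 pnatr_eq0 muln_eq0 negb_or -!lt0n m_gt0.
Qed.

Lemma fps_expXnB1 c k :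
  fps_exp c ^+ k - 1 = fps_const (k%:R * c) * fps_T * fps_expm1_div (k%:R * c).
Proof. by rewrite fps_expMn fps_expB1. Qed.

Lemma expm1_div_identity {a b l : nat} {g1 g2 : {poly rat}} :
  (0 < a)%N -> (0 < b)%N -> (0 < l)%N ->
  (a * b)%:R * ('X - 1) ^+ 2 = ('X^a - 1) * ('X^b - 1)
    + (a * b)%:R * ('X - 1) ^+ 2 * (g2 * ('X^a - 1) + g1 * ('X^b - 1)) ->
  fps_expm1_div l%:R ^+ 2 =
    fps_expm1_div (a * l)%:R * fps_expm1_div (b * l)%:R
    + fps_expm1_div l%:R ^+ 2 *
      ((a * l)%:R * fps_T * fps_peval g2 (fps_exp l%:R) * fps_expm1_div (a * l)%:R
       + (b * l)%:R * fps_T * fps_peval g1 (fps_exp l%:R) * fps_expm1_div (b * l)%:R).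
Proof.
move=> a_gt0 b_gt0 l_gt0.
set Y := fps_exp l%:R; move/(congr1 (horner_morph (fps_const_comm Y))).
rewrite !(rmorph_nat, rmorphXn, rmorphB, rmorphD, rmorphM, rmorph1) /=.
(* both occurrences of [Y - 1] are read as [Y ^+ 1 - 1] *)
rewrite !horner_morphX -!fps_pevalE -{1 3}[Y]expr1 !fps_expXnB1 mul1r.
rewrite !rmorphM !rmorph_nat => evalY.
have reg : GRing.lreg (a%:R * b%:R * l%:R ^+ 2 * fps_T ^+ 2 : fps).
  by rewrite -natrX -!natrM; apply/lregM/lregX/fps_T_lreg/fps_nat_lreg;
    rewrite !muln_gt0 a_gt0 b_gt0 ?expn_gt0 l_gt0.
apply: reg; transitivity (a%:R * b%:R * (l%:R * fps_T * fps_expm1_div l%:R) ^+ 2).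
  by ring.
by rewrite evalY; ring.
Qed.

Lemma mul_inverse_identity {R : comRingType} {Dl Dm Dn Bl Bm Bn u v : R} :
  Dl * Bl = 1 -> Dm * Bm = 1 -> Dn * Bn = 1 ->
  Dl ^+ 2 = Dm * Dn + Dl ^+ 2 * (u * Dm + v * Dn) ->
  Bm * Bn = Bl ^+ 2 + u * Bn + v * Bm.
Proof.
move=> DBl DBm DBn eqD.
transitivity (Bl ^+ 2 * Bm * Bn * Dl ^+ 2).
  by rewrite -[LHS]mulr1 -(expr1n _ 2) -DBl; ring.
rewrite eqD; transitivity (Bl ^+ 2 * (Dm * Bm) * (Dn * Bn)
  + (Dl * Bl) ^+ 2 * (u * Bn * (Dm * Bm) + v * Bm * (Dn * Bn))); first by ring.
by rewrite DBl DBm DBn !mulr1 expr1n mul1r addrA.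
Qed.

Theorem mainTheorem4 (m n : nat) (gmn gnm : {poly rat}) :
  (0 < m)%N -> (0 < n)%N -> m <> n ->
  g_spec m n gmn gnm ->
  forall k : nat,
    fps_mul (Bser m%:R) (Bser n%:R) k =
    fps_add (B2ser (gcdn m n)%:R)
      (fps_add
        (fps_scale m%:R (fps_mul fps_T
           (fps_mul (Bser n%:R) (fps_peval gnm (fps_exp 1)))))
        (fps_scale n%:R (fps_mul fps_T
           (fps_mul (Bser m%:R) (fps_peval gmn (fps_exp 1)))))) k.
Proof.
move=> m_gt0 n_gt0 _ [g1 [g2 [spec -> ->]]] k.
set l := gcdn m n; set m' := (m %/ l)%N; set n' := (n %/ l)%N.
have l_gt0 : (0 < l)%N by rewrite gcdn_gt0 m_gt0.
have em : (m' * l)%N = m by rewrite divnK ?dvdn_gcdl.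
have en : (n' * l)%N = n by rewrite divnK ?dvdn_gcdr.
have m'_gt0 : (0 < m')%N by move: m_gt0; rewrite -em muln_gt0 => /andP [].
have n'_gt0 : (0 < n')%N by move: n_gt0; rewrite -en muln_gt0 => /andP [].
have := expm1_div_identity m'_gt0 n'_gt0 l_gt0 (g_coprime_spec_clear m'_gt0 n'_gt0 spec).
rewrite em en => /(mul_inverse_identity (mul_expm1_div_Bser _) (mul_expm1_div_Bser _)
  (mul_expm1_div_Bser _)) eqB.
rewrite /B2ser !fps_peval_comp_Xn mulr1 !fps_mulE !fps_addE !fps_scaleE !rmorph_nat.
by rewrite eqB; apply: (congr1 (fun f : fps => f k)); ring.
Qed.
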